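(* Given the ability to perform incoherent unitaries, computational basis measurements and classical control, it is impossible to implement any coherent unitary (e.g. the Hadamard gate) exactly with any non-zero probability, even when supplemented with an arbitrary ancillary state.
   Context: Fix the computational basis $\{|x\rangle\}$. A unitary is incoherent if it has the form $U=\sum_x e^{i\theta_x}|\pi(x)\rangle\langle x|$ for real $\theta_x$ and a permutation $\pi$; otherwise it is coherent (maps some basis state to a superposition). Operations built from incoherent unitaries, computational basis measurements/preparations, classical control and an ancilla $\tau$ are modelled (via deferred measurement, with quantum-controlled incoherent unitaries being incoherent) as channels $\rho\mapsto \mathrm{Tr}_2\big(U(\rho\otimes\tau)U^\dagger\big)$ with $U$ incoherent, or in the probabilistic case as convex combinations of normalised subchannels $\rho\mapsto \alpha\,\mathrm{Tr}_X\big((I\otimes|x\rangle\langle x|)\,U(\rho\otimes\tau)U^\dagger\big)$ with $\alpha$ independent of $\rho$. The ancilla $\tau$ is an arbitrary fixed state of arbitrary dimension. *)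

(* Complex scalars: an arbitrary numClosedFieldType C
   (e.g. R[i] for R : realType); x^* is complex conjugation. *)
From HB Require Import structures.
From mathcomp Require Import all_boot all_order all_algebra all_fingroup.
Set Implicit Arguments. Unset Strict Implicit. Unset Printing Implicit Defensive.
Import Order.TTheory GRing.Theory Num.Theory.
Local Open Scope ring_scope.

Section QDefs.
Variable C : numClosedFieldType.

Definition adj m n (A : 'M[C]_(m, n)) : 'M[C]_(n, m) := (map_mx Num.conj A)^T.

(* Kronecker (tensor) product A (x) B, basis |i> (x) |k> <-> mxvec_index i k *)
Definition kron m n (A : 'M[C]_m) (B : 'M[C]_n) : 'M[C]_(m * n) :=
  \matrix_(p, q) \sum_(i < m) \sum_(k < n) \sum_(j < m) \sum_(l < n)
     (if (p == mxvec_index i k) && (q == mxvec_index j l)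
      then A i j * B k l else 0).

Definition ptrace2 m n (A : 'M[C]_(m * n)) : 'M[C]_m :=
  \matrix_(i, j) \sum_(k < n) A (mxvec_index i k) (mxvec_index j k).

Definition unitary n (V : 'M[C]_n) : Prop := V *m adj V = 1%:M.

Definition incoherent n (U : 'M[C]_n) : Prop :=
  exists (pi : 'S_n) (ph : 'I_n -> C),
    (forall x, `|ph x| = 1) /\
    U = \matrix_(i, j) (if i == pi j then ph j else 0).

Definition psd n (A : 'M[C]_n) : Prop :=
  adj A = A /\ forall v : 'cV[C]_n, 0 <= (adj v *m A *m v) 0 0.

Definition density n (A : 'M[C]_n) : Prop := psd A /\ \tr A = 1.

Definition basis_proj n (S : pred 'I_n) : 'M[C]_n :=
  \matrix_(i, j) (if (i == j) && S i then 1 else 0).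

Definition subchannel d m (alpha : C) (U : 'M[C]_(d * m)) (tau : 'M[C]_m)
    (S : pred 'I_m) (rho : 'M[C]_d) : 'M[C]_d :=
  alpha *: ptrace2 (kron 1%:M (basis_proj S) *m U *m kron rho tau *m adj U).

End QDefs.

From HB Require Import structures.
From mathcomp Require Import all_boot all_order all_algebra all_fingroup.
From mathcomp Require Import ring.
Set Implicit Arguments. Unset Strict Implicit. Unset Printing Implicit Defensive.
Import Order.TTheory GRing.Theory Num.Theory.
Local Open Scope ring_scope.

(* An incoherent unitary permutes the computational basis up to phases, so
   conjugating by it, tensoring with an ancilla, applying a basis projector and
   tracing out all yield outputs whose diagonal depends only on the diagonal of
   the input; hence so does any mixture of such subchannels.  If a mixture
   implements V, the diagonal of V rho V^* depends only on that of rho.  The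
   states (|x> + z|x'>)(<x| + z^*<x'|)/2 with z = +-1, +-i share their diagonal,
   and comparing their images forces V a x * (V a x')^* = 0 for x <> x': every
   row of V has a single nonzero entry, and a unitary with this property is
   incoherent. *)

Section DiagonalDependence.
Variable C : numClosedFieldType.

Lemma mxvec_index_eq m n (i j : 'I_m) (k l : 'I_n) :
  (mxvec_index i k == mxvec_index j l) = ((i == j) && (k == l)).
Proof.
by apply/eqP/andP => [/cast_ord_inj/enum_rank_inj [-> ->] | [/eqP-> /eqP->]].
Qed.

Lemma kron_mxvec_index m n (A : 'M[C]_m) (B : 'M[C]_n) i k j l :
  kron A B (mxvec_index i k) (mxvec_index j l) = A i j * B k l.
Proof.
rewrite mxE pair_big; under eq_bigr do rewrite pair_big.
rewrite pair_big -big_mkcond /= (big_pred1 ((i, k), (j, l))) // => -[[i' k'] [j' l']].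
by rewrite /= !mxvec_index_eq [RHS]eq_sym.
Qed.

Lemma kron_diag m n (A A' : 'M[C]_m) (B : 'M[C]_n) :
  (forall i, A i i = A' i i) -> forall p, kron A B p p = kron A' B p p.
Proof. by move=> eqA p; case/mxvec_indexP: p => i k; rewrite !kron_mxvec_index eqA. Qed.

Lemma kron_is_diag m n (A : 'M[C]_m) (B : 'M[C]_n) :
  is_diag_mx A -> is_diag_mx B -> is_diag_mx (kron A B).
Proof.
move=> /is_diag_mxP dA /is_diag_mxP dB; apply/is_diag_mxP => p q.
case/mxvec_indexP: p => i k; case/mxvec_indexP: q => j l.
rewrite (inj_eq val_inj) mxvec_index_eq negb_and kron_mxvec_index.
by case/orP => [/dA -> | /dB ->]; rewrite ?mul0r ?mulr0.
Qed.

Lemma basis_proj_is_diag n (S : pred 'I_n) : is_diag_mx (basis_proj C S).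
Proof. by apply/is_diag_mxP => i j /negbTE ne; rewrite mxE -(inj_eq val_inj) ne. Qed.

Lemma diag_mulmx n (D X : 'M[C]_n) p : is_diag_mx D -> (D *m X) p p = D p p * X p p.
Proof.
move=> /is_diag_mxP dD; rewrite mxE (bigD1 p) //= big1 ?addr0 // => q ne.
by rewrite dD ?mul0r // eq_sym.
Qed.

Lemma ptrace2_diag m n (A A' : 'M[C]_(m * n)) :
  (forall p, A p p = A' p p) -> forall i, ptrace2 A i i = ptrace2 A' i i.
Proof. by move=> eqA i; rewrite !mxE; apply: eq_bigr => k _; rewrite eqA. Qed.

Lemma conj_diag_single_row_entry n (U K : 'M[C]_n) p r :
  (forall q, q != r -> U p q = 0) ->
  (U *m K *m adj U) p p = U p r * K r r * (U p r)^*.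
Proof.
move=> Ur; rewrite mxE (bigD1 r) //= big1 ?addr0 => [|q /Ur]; last first.
  by rewrite /adj !mxE => ->; rewrite conjC0 mulr0.
rewrite /adj !mxE (bigD1 r) //= big1 ?addr0 // => q /Ur ->.
by rewrite mul0r.
Qed.

Lemma incoherent_conj_diag n (U K K' : 'M[C]_n) :
  incoherent U -> (forall i, K i i = K' i i) ->
  forall p, (U *m K *m adj U) p p = (U *m K' *m adj U) p p.
Proof.
case=> pi [ph [_ ->]] eqK p.
have Ur q : q != (pi^-1 p)%g -> (\matrix_(i, j) (if i == pi j then ph j else 0)) p q = 0.
  by move=> ne; rewrite mxE; case: eqP => // pq; case/eqP: ne; rewrite pq permK.
by rewrite !(conj_diag_single_row_entry _ Ur) eqK.
Qed.

Lemma subchannel_diag d m (alpha : C) (U : 'M[C]_(d * m)) tau S (rho rho' : 'M[C]_d) :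
  incoherent U -> (forall i, rho i i = rho' i i) ->
  forall i, subchannel alpha U tau S rho i i = subchannel alpha U tau S rho' i i.
Proof.
move=> incU eqrho i; rewrite /subchannel ![(_ *: _ : 'M_d) i i]mxE; congr (_ * _).
apply: ptrace2_diag => p.
have diagP := kron_is_diag (scalar_mx_is_diag d 1) (basis_proj_is_diag S).
rewrite -!mulmxA !(diag_mulmx _ _ diagP) !mulmxA; congr (_ * _).
exact/incoherent_conj_diag/kron_diag.
Qed.

Definition diag_determined n (f : 'M[C]_n -> 'M[C]_n) : Prop :=
  forall rho rho', density rho -> density rho' -> (forall i, rho i i = rho' i i) ->
  forall i, f rho i i = f rho' i i.

Lemma adjM m n p (A : 'M[C]_(m, n)) (B : 'M[C]_(n, p)) : adj (A *m B) = adj B *m adj A.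
Proof. by rewrite /adj map_mxM trmx_mul. Qed.

Lemma adjK m n (A : 'M[C]_(m, n)) : adj (adj A) = A.
Proof. by apply/matrixP => i j; rewrite /adj !mxE conjCK. Qed.

Lemma adjZ m n c (A : 'M[C]_(m, n)) : adj (c *: A) = c^* *: adj A.
Proof. by apply/matrixP => i j; rewrite /adj !mxE rmorphM. Qed.

Lemma outer_diag n (u : 'cV[C]_n) i : (u *m adj u) i i = `|u i 0| ^+ 2.
Proof. by rewrite normCK mxE big_ord1 /adj !mxE. Qed.

Lemma psd_outer n (u : 'cV[C]_n) : psd (u *m adj u).
Proof.
split; first by rewrite adjM adjK.
by move=> v; rewrite !mulmxA -[v in _ *m v]adjK -mulmxA -adjM outer_diag exprn_ge0.
Qed.

Lemma psdZ n c (A : 'M[C]_n) : 0 <= c -> psd A -> psd (c *: A).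
Proof.
move=> c_ge0 [adjA posA]; split; first by rewrite adjZ adjA conj_Creal ?ger0_real.
by move=> v; rewrite -scalemxAr -scalemxAl mxE mulr_ge0.
Qed.

Lemma mxtrace_outer n (u : 'cV[C]_n) : \tr (u *m adj u) = \sum_i `|u i 0| ^+ 2.
Proof. by apply: eq_bigr => i _; rewrite outer_diag. Qed.

Definition probe n (x x' : 'I_n) (z : C) : 'cV[C]_n := delta_mx x 0 + z *: delta_mx x' 0.

Definition probe_state n (x x' : 'I_n) (z : C) : 'M[C]_n :=
  2^-1 *: (probe x x' z *m adj (probe x x' z)).

Lemma probe_entry n (x x' : 'I_n) z i :
  probe x x' z i 0 = (i == x)%:R + z * (i == x')%:R.
Proof. by rewrite !mxE !andbT. Qed.

Lemma probe_state_density n (x x' : 'I_n) z :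
  x != x' -> `|z| = 1 -> density (probe_state x x' z).
Proof.
move=> neq z1; split; first by apply/psdZ/psd_outer; rewrite invr_ge0 ler0n.
rewrite mxtraceZ mxtrace_outer (bigD1 x) //= (bigD1 x') 1?eq_sym //= big1 ?addr0.
- rewrite !probe_entry !eqxx (negbTE neq) eq_sym (negbTE neq) /= mulr0 mulr1 addr0 add0r.
  by rewrite normr1 z1 expr1n -mulr2n mulVf ?pnatr_eq0.
- by move=> i /andP [/negbTE ix /negbTE ix']; rewrite probe_entry ix ix' mulr0 addr0 normr0 expr0n.
Qed.

Lemma probe_state_diagN n (x x' : 'I_n) z i : x != x' ->
  probe_state x x' (- z) i i = probe_state x x' z i i.
Proof.
move=> neq; rewrite ![(_ *: _ : 'M_n) i i]mxE !outer_diag !probe_entry.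
case: eqP => [-> | _]; first by rewrite (negbTE neq) !mulr0.
by rewrite !add0r; case: (i == x'); rewrite ?mulr0 ?mulr1 ?normrN.
Qed.

Lemma probe_state_conj_diag n (V : 'M[C]_n) (x x' : 'I_n) z a :
  (V *m probe_state x x' z *m adj V) a a = 2^-1 * `|V a x + z * V a x'| ^+ 2.
Proof.
rewrite -scalemxAr -scalemxAl mxE -!mulmxA -adjM mulmxA outer_diag.
by rewrite mulmxDr -scalemxAr -!colE !mxE.
Qed.

Lemma mul_conj_eq0 (a b : C) :
  `|a + b| ^+ 2 = `|a - b| ^+ 2 -> `|a + 'i * b| ^+ 2 = `|a - 'i * b| ^+ 2 ->
  a * b^* = 0.
Proof.
rewrite !normCK !(rmorphD, rmorphN, rmorphM) /= conjCi => re im.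
have two_neq0 : (2 : C) != 0 by rewrite pnatr_eq0.
have re0 : a * b^* + b * a^* = 0.
  apply: (mulfI two_neq0); rewrite mulr0.
  by transitivity ((a + b) * (a^* + b^*) - (a - b) * (a^* - b^*)); [ring | rewrite re subrr].
have imE : b * a^* = a * b^*.
  apply/eqP; rewrite -subr_eq0; apply/eqP/(mulfI (mulf_neq0 two_neq0 (neq0Ci C))).
  rewrite mulr0; transitivity ((a + 'i * b) * (a^* + - 'i * b^*) - (a - 'i * b) * (a^* - - 'i * b^*)).
    by ring.
  by rewrite im subrr.
rewrite imE in re0; apply: (mulfI two_neq0).
by rewrite mulr0 mulr_natl mulr2n.
Qed.

Lemma unitary_rowsE n (V : 'M[C]_n) a b :
  unitary V -> \sum_x V a x * (V b x)^* = (a == b)%:R.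
Proof.
move/(congr1 (fun M : 'M[C]_n => M a b)); rewrite !mxE => <-.
by apply: eq_bigr => x _; rewrite /adj !mxE.
Qed.

Lemma unitary_sparse_rows_incoherent n (V : 'M[C]_n) :
  unitary V -> (forall a x x', x != x' -> V a x * (V a x')^* = 0) -> incoherent V.
Proof.
move=> unitV sparse; pose sigma a := odflt a [pick x | V a x != 0].
have Vsigma a : V a (sigma a) != 0.
  rewrite /sigma; case: pickP => [x //|V0].
  have := unitary_rowsE a a unitV; rewrite eqxx big1 => [/eqP|x _].
    by rewrite eq_sym oner_eq0.
  by move/negbFE/eqP: (V0 x) ->; rewrite mul0r.
have V0 a y : y != sigma a -> V a y = 0.
  move=> ne; have /eqP : V a (sigma a) * (V a y)^* = 0 by rewrite sparse // eq_sym.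
  by rewrite mulf_eq0 (negbTE (Vsigma a)) conjC_eq0 => /eqP.
have rowsE a b : V a (sigma a) * (V b (sigma a))^* = (a == b)%:R.
  rewrite -(unitary_rowsE a b unitV) (bigD1 (sigma a)) //= big1 ?addr0 // => y /V0 ->.
  by rewrite mul0r.
have sigma_inj : injective sigma.
  move=> a b eq_sigma; apply/eqP; apply: contraT => neq.
  have /eqP := rowsE a b; rewrite (negbTE neq) mulf_eq0 conjC_eq0 (negbTE (Vsigma a)).
  by rewrite eq_sigma (negbTE (Vsigma b)).
pose s := perm sigma_inj; have sE a : s a = sigma a by rewrite permE.
exists (s^-1)%g, (fun j => V ((s^-1)%g j) j); split.
  move=> j; apply/eqP; rewrite -sqrp_eq1 ?normr_ge0 // normCK.
  by rewrite -{2 4}[j](permKV s) sE rowsE eqxx.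
apply/matrixP => i j; rewrite mxE; case: eqP => [-> // | ne].
by apply: V0; apply: contra_notN ne => /eqP ->; rewrite -sE permK.
Qed.

Lemma diag_determined_unitary_incoherent n (V : 'M[C]_n) :
  unitary V -> diag_determined (fun rho => V *m rho *m adj V) -> incoherent V.
Proof.
move=> unitV detV; apply: unitary_sparse_rows_incoherent => // a x x' neq.
have half_neq0 : (2^-1 : C) != 0 by rewrite invr_eq0 pnatr_eq0.
have flip z : `|z| = 1 -> `|V a x + z * V a x'| ^+ 2 = `|V a x - z * V a x'| ^+ 2.
  move=> z1; have zN1 : `|- z| = 1 by rewrite normrN.
  have := detV _ _ (probe_state_density neq z1) (probe_state_density neq zN1).
  move=> /(_ (fun i => esym (probe_state_diagN z i neq)) a).
  by rewrite !probe_state_conj_diag mulNr => /(mulfI half_neq0).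
apply: mul_conj_eq0; [have := flip 1 (normr1 C) | have := flip 'i (normCi C)];
  by rewrite ?mul1r.
Qed.

End DiagonalDependence.

Theorem theorem1 (C : numClosedFieldType) (d : nat) (V : 'M[C]_d) :
  unitary V -> ~ incoherent V ->
  ~ (exists (N : nat) (q : 'I_N -> C) (m : 'I_N -> nat)
        (alpha : 'I_N -> C)
        (U : forall j : 'I_N, 'M[C]_(d * m j))
        (tau : forall j : 'I_N, 'M[C]_(m j))
        (S : forall j : 'I_N, pred 'I_(m j)),
        (forall j, 0 <= q j) /\ \sum_(j < N) q j = 1 /\
        (forall j, 0 < alpha j) /\
        (forall j, incoherent (U j)) /\
        (forall j, density (tau j)) /\
        (forall rho : 'M[C]_d, density rho ->
           \sum_(j < N) q j *: subchannel (alpha j) (U j) (tau j) (S j) rho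
           = V *m rho *m adj V)).
Proof.
move=> unitV coherentV [N [q [m [alpha [U [tau [S [_ [_ [_ [incU [_ implV]]]]]]]]]]]].
apply/coherentV/diag_determined_unitary_incoherent => // rho rho' rho_dens rho'_dens eq_diag i.
rewrite -implV // -implV // !summxE; apply: eq_bigr => j _; rewrite [LHS]mxE [RHS]mxE.
by rewrite (subchannel_diag _ _ _ (incU j) eq_diag).
Qed.
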